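(* If $G$ is a nontrivial graph of order $n$ having a vertex of degree $k$, then $\beta_p(G)\le n-\min\{k,n-1-k\}$.
   Context: All graphs are finite, simple, undirected and connected. For a partition $\Pi=\{S_1,\dots,S_m\}$ of $V(G)$, $r(u|\Pi)=(d(u,S_1),\dots,d(u,S_m))$ with $d(u,S)=\min_{w\in S}d(u,w)$; $\Pi$ is locating if $r(u|\Pi)\ne r(v|\Pi)$ for all distinct $u,v$; $\beta_p(G)$ is the minimum size of a locating partition. *)

From mathcomp Require Import all_boot.
Set Implicit Arguments. Unset Strict Implicit. Unset Printing Implicit Defensive.

Definition simple_graph (T : finType) (e : rel T) : Prop :=
  symmetric e /\ irreflexive e.

Definition connected_graph (T : finType) (e : rel T) : Prop :=
  forall u v : T, connect e u v.

Fixpoint ball (T : finType) (e : rel T) (n : nat) (u : T) : {set T} :=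
  match n with
  | 0 => [set u]
  | n'.+1 => ball e n' u :|: [set y | [exists x in ball e n' u, e x y]]
  end.

(* graph distance (correct for connected graphs: every distance is < #|T|) *)
Definition dist (T : finType) (e : rel T) (u v : T) : nat :=
  find (fun n => v \in ball e n u) (iota 0 #|T|).

Definition dist_set (T : finType) (e : rel T) (u : T) (S : {set T}) : nat :=
  \big[minn/#|T|]_(w in S) dist e u w.

Definition deg (T : finType) (e : rel T) (v : T) : nat := #|[set w | e v w]|.

Definition locating (T : finType) (e : rel T) (P : {set {set T}}) : bool :=
  partition P [set: T] &&
  [forall u : T, forall v : T,
     (u != v) ==> [exists S in P, dist_set e u S != dist_set e v S]].

Definition beta_p (T : finType) (e : rel T) : nat :=
  \big[minn/#|T|]_(P : {set {set T}} | locating e P) #|P|.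

From mathcomp Require Import all_boot.
Set Implicit Arguments. Unset Strict Implicit. Unset Printing Implicit Defensive.

(* Let N be the neighbours of v and M the vertices other than v not adjacent
   to it, so #|N| = k and #|M| = n - 1 - k.  Match m = min(#|N|, #|M|) vertices
   of M injectively with vertices of N and take the partition into these m pairs
   and singletons; it has n - m blocks.  Vertices in different blocks are told
   apart by the block of either one (distance 0 versus positive), and the two
   vertices of a pair by the singleton block {v}: the one in N is at distance 1
   from v, the one in M is not.  Only distances 0 and 1 occur. *)

Lemma geq_bigmin_cond (I : eqType) (r : seq I) (m : nat) (P : pred I) (F : I -> nat) j :
  j \in r -> P j -> \big[minn/m]_(i <- r | P i) F i <= F j.
Proof.
move=> + Pj; elim: r => [//|x r IH]; rewrite inE big_cons.
case/orP=> [/eqP<-|jr]; first by rewrite Pj geq_minl.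
by case: (P x); rewrite ?geq_min IH ?orbT.
Qed.

Lemma beta_p_le_locating (T : finType) (e : rel T) (P : {set {set T}}) :
  locating e P -> beta_p e <= #|P|.
Proof. by apply: geq_bigmin_cond; rewrite mem_index_enum. Qed.

Lemma card_preim_partition (T rT : finType) (f : T -> rT) (D : {set T}) :
  #|preim_partition f D| = #|f @: D|.
Proof.
have -> : preim_partition f D = (fun z => [set y in D | z == f y]) @: (f @: D).
  by rewrite /preim_partition /equivalence_partition -imset_comp.
apply: card_in_imset => _ z2 /imsetP [x Dx ->] _ /setP /(_ x).
by rewrite !inE Dx eqxx => /esym/eqP.
Qed.

Section Distances.
Variables (T : finType) (e : rel T).
(* [dist] searches the range [iota 0 #|T|]; with fewer than two vertices it
   could not even detect distance 1. *)
Hypothesis T_gt1 : 1 < #|T|.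

Lemma iota_card : iota 0 #|T| = 0 :: 1 :: iota 2 (#|T| - 2).
Proof. by case: #|T| T_gt1 => [|[|n]] //= _; rewrite subn2. Qed.

Lemma dist_eq0 u w : (dist e u w == 0) = (u == w).
Proof. by rewrite /dist iota_card /= inE (eq_sym u); case: (w == u). Qed.

Lemma dist_eq1 u w : u != w -> (dist e u w == 1) = e u w.
Proof.
move=> uw; have wu : (w == u) = false by rewrite eq_sym (negbTE uw).
rewrite /dist iota_card /= !inE wu /=.
have -> : [exists x in [set u], e x w] = e u w.
  by apply/existsP/idP => [[x /andP [/set1P -> //]]|euw]; exists u; rewrite inE eqxx.
by case: (e u w).
Qed.

Lemma dist_set_eq0 u (S : {set T}) : (dist_set e u S == 0) = (u \in S).
Proof.
apply/idP/idP => [|uS]; last first.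
  have /eqP duu : dist e u u == 0 by rewrite dist_eq0.
  by rewrite -leqn0 -duu; apply: geq_bigmin_cond; rewrite ?mem_index_enum.
apply: contraLR => uS; rewrite -lt0n; apply: (big_ind (fun x => 0 < x)).
- exact: ltnW.
- by move=> a b a0 b0; rewrite leq_min a0 b0.
- by move=> w wS; rewrite lt0n dist_eq0; apply: contraNneq uS => ->.
Qed.

Lemma dist_set1 u v : dist_set e u [set v] = dist e u v.
Proof.
rewrite /dist_set (big_pred1_id _ _ _ (fun y => in_set1 y v)); apply/minn_idPl.
by rewrite -[leqRHS](size_iota 0) find_size.
Qed.

Lemma preim_partition_locating (rT : eqType) (f : T -> rT) (S : {set T}) :
    S \in preim_partition f [set: T] ->
    (forall u w, u != w -> f u = f w -> dist_set e u S != dist_set e w S) ->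
  locating e (preim_partition f [set: T]).
Proof.
move=> PS sepS; rewrite /locating preim_partitionP.
apply/forallP => u; apply/forallP => w; apply/implyP => uw; apply/existsP.
have [fuw|fuw] := eqVneq (f u) (f w); first by exists S; rewrite PS sepS.
exists [set y in [set: T] | f u == f y]; rewrite imset_f ?inE //=.
have /eqP -> : dist_set e u [set y in [set: T] | f u == f y] == 0.
  by rewrite dist_set_eq0 !inE eqxx.
by rewrite (eq_sym 0) dist_set_eq0 !inE.
Qed.

End Distances.

Section Pairing.
Variables (T : finType) (A B : {set T}).
Hypothesis disjointAB : [disjoint A & B].

Let m := minn #|A| #|B|.
Let Y := [set x in take m (enum B)].
Let pair_map x := if x \in Y then nth x (enum A) (index x (enum B)) else x.

Let index_Y x : x \in Y -> index x (enum B) < m.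
Proof. by rewrite inE; apply: index_ltn. Qed.

Let Y_subset x : x \in Y -> x \in B.
Proof. by rewrite inE => /mem_take; rewrite mem_enum. Qed.

Let pair_map_Y x : x \in Y -> pair_map x \in A.
Proof.
move=> xY; rewrite /pair_map xY -mem_enum mem_nth //.
by rewrite -cardE (leq_trans (index_Y xY)) ?geq_minl.
Qed.

Let pair_map_notin_Y x : pair_map x \notin Y.
Proof.
have [xY|xY] := boolP (x \in Y); last by rewrite /pair_map (negbTE xY).
by apply/negP => /Y_subset; rewrite (disjointFr disjointAB) ?pair_map_Y.
Qed.

Let pair_map_inj : {in Y &, injective pair_map}.
Proof.
move=> u w uY wY; rewrite /pair_map uY wY.
have sizeA : m <= size (enum A) by rewrite -cardE geq_minl.
have lt_index z : z \in Y -> index z (enum B) < size (enum A).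
  by move/index_Y/leq_trans; apply.
rewrite (set_nth_default w) ?lt_index // => /eqP.
rewrite nth_uniq ?enum_uniq ?lt_index // => /eqP eq_index.
have memB z : z \in Y -> z \in enum B by rewrite mem_enum => /Y_subset.
by rewrite -(nth_index u (memB _ uY)) eq_index nth_index ?memB.
Qed.

Let card_Y : #|Y| = m.
Proof.
have /card_uniqP uniqY : uniq (take m (enum B)) by rewrite take_uniq ?enum_uniq.
by rewrite cardsE uniqY size_takel // -cardE geq_minr.
Qed.

Let card_pair_map_image : #|pair_map @: [set: T]| = #|T| - m.
Proof.
have -> : pair_map @: [set: T] = ~: Y.
  apply/setP => x; rewrite inE; apply/imsetP/idP => [[y _ ->]|xY].
    exact: pair_map_notin_Y.
  by exists x; rewrite ?inE // /pair_map (negbTE xY).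
by rewrite cardsCs setCK card_Y.
Qed.

Let pair_map_fiber u w : u != w -> pair_map u = pair_map w ->
  (u \in B) && (w \in A) || (u \in A) && (w \in B).
Proof.
have fixed z : z \notin Y -> pair_map z = z by rewrite /pair_map => /negbTE ->.
have [uY|uY] := boolP (u \in Y); have [wY|wY] := boolP (w \in Y).
- by move=> uw /(pair_map_inj uY wY) eq_uw; rewrite eq_uw eqxx in uw.
- by move=> _ pu; rewrite Y_subset //= -(fixed w wY) -pu pair_map_Y.
- by move=> _ pw; rewrite (Y_subset wY) andbT -(fixed u uY) pw pair_map_Y ?orbT.
- by move=> uw; rewrite (fixed u) // (fixed w) // => eq_uw; rewrite eq_uw eqxx in uw.
Qed.

Lemma exists_pairing_map : exists f : T -> T,
  #|f @: [set: T]| = #|T| - minn #|A| #|B| /\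
  forall u w, u != w -> f u = f w ->
    (u \in B) && (w \in A) || (u \in A) && (w \in B).
Proof. exists pair_map; split; first exact: card_pair_map_image. exact: pair_map_fiber. Qed.

End Pairing.

Section PairingPartition.
Variables (T : finType) (e : rel T) (v : T).
Hypotheses (simple_e : simple_graph e) (T_gt1 : 1 < #|T|).

Let N := [set w | e v w].
Let M := [set w | (w != v) && ~~ e v w].

Let v_notin_N : v \notin N.
Proof. by rewrite inE (proj2 simple_e). Qed.

Let disjoint_NM : [disjoint N & M].
Proof. by rewrite -setI_eq0; apply/eqP/setP => x; rewrite !inE andbCA andbN andbF. Qed.

Let card_M : #|M| = #|T| - 1 - deg e v.
Proof.
have -> : M = ~: (v |: N) by apply/setP => x; rewrite !inE negb_or.
by rewrite cardsCs setCK cardsU1 v_notin_N subnDA.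
Qed.

Lemma beta_p_le_pairing :
  beta_p e <= #|T| - minn (deg e v) (#|T| - 1 - deg e v).
Proof.
have [f [card_f fiber_f]] := exists_pairing_map disjoint_NM.
have block_v : [set y in [set: T] | f v == f y] = [set v].
  apply/setP => y; rewrite !inE; apply/idP/eqP => [fvy|->]; last by rewrite eqxx.
  apply/eqP; apply: contraTT fvy => yv; apply/eqP => /(fiber_f v y); rewrite eq_sym yv.
  by case/(_ isT)/orP => /andP []; rewrite !inE ?eqxx ?(proj2 simple_e).
have dist_N x : x \in N -> dist e x v = 1.
  move=> xN; apply/eqP; rewrite (dist_eq1 _ T_gt1); first by rewrite inE (proj1 simple_e) in xN.
  by apply: contraTneq xN => ->.
have dist_M x : x \in M -> dist e x v != 1.
  by rewrite inE => /andP [xv not_evx]; rewrite (dist_eq1 _ T_gt1) // (proj1 simple_e).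
have locating_f : locating e (preim_partition f [set: T]).
  apply: (preim_partition_locating T_gt1 (S := [set v])).
    by rewrite -block_v imset_f.
  move=> u w uw fuw; rewrite !dist_set1.
  case/orP: (fiber_f u w uw fuw) => /andP [uX wX].
    by rewrite (dist_N w) ?dist_M.
  by rewrite (dist_N u) // eq_sym dist_M.
rewrite -card_M -card_f -card_preim_partition.
exact: beta_p_le_locating.
Qed.

End PairingPartition.

Theorem lemma10 (T : finType) (e : rel T) (v : T) (k : nat) :
  simple_graph e -> connected_graph e -> 2 <= #|T| -> deg e v = k ->
  beta_p e <= #|T| - minn k (#|T| - 1 - k).
Proof. by move=> simple_e _ T_gt1 <-; apply: beta_p_le_pairing. Qed.
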